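(* For $\tau\in P\Lambda^{n-k,k}$ the map $\Psi_\tau(f)[B]=D(f)[1_{\pi^{-1}(B)}\tau] $ is given for $f\in\mathrm{Conv}(\mathbb{R}^n,\mathbb{R})\cap C^2(\mathbb{R}^n)$ by \begin{align*} \Psi_\tau(f)[B]=\int_{B}P_\tau(D^2f(x))d\mathrm{vol}_n(x)\quad\text{for all bounded Borel sets } B\subset\mathbb{R}^n. \end{align*}
   Context: $\mathrm{Conv}(\mathbb{R}^n,\mathbb{R})$ denotes the finite-valued convex functions on $\mathbb{R}^n$. $P\Lambda^{n-k,k}$ is the space of constant complex forms in $\Lambda^{n-k}\mathbb{R}^n\otimes\Lambda^k(\mathbb{R}^n)^*$ on $T^*\mathbb{R}^n=\mathbb{R}^n\times(\mathbb{R}^n)^*$ that are primitive ($\omega_s\wedge\tau=0$ for the symplectic form $\omega_s$); $\pi$ is the projection onto the first factor and $D(f)$ Fu's differential cycle. Extending $\tau$ $\mathbb{C}$-linearly to a constant holomorphic form on $\mathbb{C}^n\times(\mathbb{C}^n)^*$, $P_\tau$ is the polynomial on complex symmetric $(n\times n)$-matrices defined by $F_Q^*\tau=P_\tau(Q)dz_1\wedge\dots\wedge dz_n$, where $F_Q(z)=(z,z^TQ)$. *)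

From HB Require Import structures.
From mathcomp Require Import all_boot all_order all_algebra.
From mathcomp Require Import all_classical all_reals all_analysis.
From mathcomp Require Import complex.
Set Implicit Arguments. Unset Strict Implicit. Unset Printing Implicit Defensive.
Import Order.TTheory GRing.Theory Num.Theory.
Import numFieldNormedType.Exports.
Local Open Scope classical_set_scope.
Local Open Scope ring_scope.
Local Open Scope complex_scope.

Section Defs.
Variable R : realType.

Definition evec (n : nat) (i : 'I_n) : 'rV[R]_n := delta_mx 0 i.

Definition partial (n : nat) (f : 'rV[R]_n -> R) (i : 'I_n) : 'rV[R]_n -> R :=
  fun x => derive f x (evec i).

Definition hessian (n : nat) (f : 'rV[R]_n -> R) (x : 'rV[R]_n) : 'M[R]_n :=
  \matrix_(i < n, j < n) partial (partial f i) j x.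

Definition C2 (n : nat) (f : 'rV[R]_n -> R) : Prop :=
  continuous f /\
  (forall i x, derivable f x (evec i)) /\
  (forall i, continuous (partial f i)) /\
  (forall i j x, derivable (partial f i) x (evec j)) /\
  (forall i j, continuous (partial (partial f i) j)).

Definition convex_fun (n : nat) (f : 'rV[R]_n -> R) : Prop :=
  forall (x y : 'rV[R]_n) (t : R), 0 <= t <= 1 ->
    f (t *: x + (1 - t) *: y) <= t * f x + (1 - t) * f y.

Definition borel_rV (n : nat) (B : set 'rV[R]_n) : Prop :=
  smallest (sigma_algebra setT) (@open 'rV[R]_n) B.

Definition bounded_rV (n : nat) (B : set 'rV[R]_n) : Prop :=
  exists M : R, forall x, B x -> `|x| <= M.

(* Lebesgue integral over R^n, computed as the iterated one-dimensional
   Lebesgue integral (Fubini); x = (x_0, x') with x' in R^(n-1). *)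
Fixpoint iint (n : nat) : ('rV[R]_n -> R) -> R :=
  match n return ('rV[R]_n -> R) -> R with
  | 0 => fun F => F 0
  | m.+1 => fun F =>
      Rintegral (@lebesgue_measure R) setT
        (fun t : R => iint (fun v : 'rV[R]_m => F (row_mx (t%:M : 'rV[R]_1) v)))
  end.

Definition cre (z : R[i]) : R := let: Complex a _ := z in a.
Definition cim (z : R[i]) : R := let: Complex _ b := z in b.

Definition cint (n : nat) (B : set 'rV[R]_n) (g : 'rV[R]_n -> R[i]) : R[i] :=
  Complex (iint (fun x => \1_B x * cre (g x)))
          (iint (fun x => \1_B x * cim (g x))).

(* Coordinates of T^*R^n = 'rV_(n+n): index lshift n i is x_i (base),
   index rshift n i is y_i (fiber).  An n-form is given by its coefficients
   c_S on the basis forms dz_{s_1} /\ ... /\ dz_{s_n}, S = {s_1 < ... < s_n};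
   coefficients of sets with #|S| <> n are irrelevant. *)
Definition cform (n : nat) := {set 'I_(n + n)} -> R[i].

Definition xidx (n : nat) (i : 'I_n) : 'I_(n + n) := lshift n i.
Definition yidx (n : nat) (i : 'I_n) : 'I_(n + n) := rshift n i.
Definition xpart (n : nat) : {set 'I_(n + n)} := [set xidx i | i : 'I_n].
Definition ypart (n : nat) : {set 'I_(n + n)} := [set yidx i | i : 'I_n].

Definition sel (n : nat) (S : {set 'I_(n + n)}) (i : 'I_n) : 'I_(n + n) :=
  nth (xidx i) (enum S) i.

(* value of a constant n-form with coefficients in a commutative ring K
   (through phi : C -> K) on n vectors v_0..v_{n-1} of K^(2n):
   (dz_{s_1}/\.../\dz_{s_n})(v_1,...,v_n) = det [dz_{s_i}(v_l)]_{i,l} *)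
Definition form_eval (n : nat) (tau : cform n) (v : 'I_n -> 'rV[R[i]]_(n + n))
  : R[i] :=
  \sum_(S : {set 'I_(n + n)} | #|S| == n)
     tau S * \det (\matrix_(i < n, l < n) v l 0 (sel S i)).

(* tau is of bidegree in  Lambda^(n-k) R^n (x) Lambda^k (R^n)^*  :
   k differentials dx (base) and n-k differentials dy (fiber). *)
Definition bidegree (n k : nat) (tau : cform n) : Prop :=
  forall S : {set 'I_(n + n)},
    tau S != 0 -> (#|S| == n) && (#|S :&: xpart n| == k).

(* omega_s /\ tau = 0, omega_s = sum_i dx_i /\ dy_i.  Coefficient of the
   basis (n+2)-form dz_T in omega_s /\ tau. *)
Definition omega_wedge_coef (n : nat) (tau : cform n) (T : {set 'I_(n + n)})
  : R[i] :=
  \sum_(i < n | (xidx i \in T) && (yidx i \in T))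
    (-1) ^+ (#|[set s in T :\ xidx i :\ yidx i | (s < xidx i)%N]|
             + #|[set s in T :\ xidx i :\ yidx i | (s < yidx i)%N]|)
    * tau (T :\ xidx i :\ yidx i).

Definition primitive (n : nat) (tau : cform n) : Prop :=
  forall T : {set 'I_(n + n)}, #|T| == n.+2 -> omega_wedge_coef tau T = 0.

Definition PLambda (n k : nat) (tau : cform n) : Prop :=
  bidegree k tau /\ primitive tau.

(* F_Q(z) = (z, z^T Q); d F_Q / d z_l = (e_l, (Q_{l j})_j).
   F_Q^* tau = tau(dF_Q e_1, ..., dF_Q e_n) dz_1 /\ ... /\ dz_n. *)
Definition dFQ (n : nat) (Q : 'M[R[i]]_n) (l : 'I_n) : 'rV[R[i]]_(n + n) :=
  row_mx (delta_mx 0 l) (row l Q).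

Definition P_tau (n : nat) (tau : cform n) (Q : 'M[R[i]]_n) : R[i] :=
  form_eval tau (dFQ Q).

(* For f in C^2, D(f) is the current of integration over the graph of df,
   oriented by the parametrization G(x) = (x, df(x)):
   D(f)[phi] = \int_{R^n} phi(G x)(dG(x) e_1, ..., dG(x) e_n) dx,
   for phi a (non constant) n-form on T^*R^n given by coefficient functions. *)
Definition dG (n : nat) (f : 'rV[R]_n -> R) (x : 'rV[R]_n) (l : 'I_n)
  : 'rV[R[i]]_(n + n) :=
  map_mx (fun r : R => r%:C)
    (row_mx (evec l) (\row_(j < n) partial (partial f j) l x)).

Definition graph_pt (n : nat) (f : 'rV[R]_n -> R) (x : 'rV[R]_n)
  : 'rV[R]_(n + n) :=
  row_mx x (\row_(j < n) partial f j x).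

Definition Dcycle_C2 (n : nat) (f : 'rV[R]_n -> R)
  (phi : 'rV[R]_(n + n) -> cform n) : R[i] :=
  cint setT (fun x => form_eval (phi (graph_pt f x)) (dG f x)).

Definition proj_base (n : nat) (p : 'rV[R]_(n + n)) : 'rV[R]_n := lsubmx p.

Definition Psi (n : nat) (tau : cform n) (f : 'rV[R]_n -> R)
  (B : set 'rV[R]_n) : R[i] :=
  Dcycle_C2 f (fun p S => (\1_(@proj_base n @^-1` B) p : R)%:C * tau S).

End Defs.

(** For [f] of class C^2 the differential cycle is the current of integration
    over the graph [x |-> (x, df(x))].  Its tangent vectors [(e_l, D^2 f(x) e_l)]
    coincide with [dF_Q e_l] for [Q = D^2 f(x)] because the Hessian is symmetric
    (Schwarz's theorem, obtained by applying the mean value theorem twice to a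
    second difference quotient), so the form pulls back to [P_tau(D^2 f(x)) dx];
    the indicator of [pi^-1(B)] on the graph is the indicator of [B]. *)
From HB Require Import structures.
From mathcomp Require Import all_boot all_order all_algebra.
From mathcomp Require Import all_classical all_reals all_analysis.
From mathcomp Require Import complex.
Import Order.TTheory GRing.Theory Num.Theory.
Import numFieldNormedType.Exports.
Local Open Scope classical_set_scope.
Local Open Scope ring_scope.
Local Open Scope complex_scope.

Section schwarz.
Variables (R : realType) (V : normedModType R).
Implicit Types (f : V -> R) (u v x y : V) (h : R).

Lemma mvt_segment {phi dphi : R -> R} {h : R} : 0 < h ->
  (forall s : R, is_derive s (1 : R) phi (dphi s)) ->
  exists2 t, 0 <= t <= h & phi h - phi 0 = dphi t * h.
Proof.
move=> h0 dphiP.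
have [t] := MVT h0 (fun s _ => dphiP s)
  (derivable_within_continuous (fun s _ => @ex_derive _ _ _ _ _ _ _ (dphiP s))).
rewrite in_itv /= subr0 => /andP[t0 th] ->.
by exists t; rewrite ?ltW.
Qed.

Lemma is_derive_line f u y (s : R) : derivable f (s *: u + y) u ->
  is_derive s 1 (fun t : R => f (t *: u + y)) ('D_u f (s *: u + y)).
Proof.
move=> df.
have E : (fun t : R => t^-1 *: (((fun r : R => f (r *: u + y)) \o shift s) (t *: 1)
            - f (s *: u + y))) =
          (fun t : R => t^-1 *: ((f \o shift (s *: u + y)) (t *: u) - f (s *: u + y))).
  by apply/funext => t /=; rewrite [t *: 1]mulr1 scalerDl addrA.
by split; rewrite /derivable /derive E.
Qed.

Definition second_difference f u v x h :=
  f (h *: u + (h *: v + x)) - f (h *: u + x) - (f (h *: v + x) - f x).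

Lemma second_differenceC f u v x h :
  second_difference f u v x h = second_difference f v u x h.
Proof.
rewrite /second_difference [h *: v + (h *: u + x)]addrCA.
rewrite !opprB !addrA addrAC [RHS]addrAC; congr (_ + _); exact: addrAC.
Qed.

Lemma second_difference_mvt {f u v} x {h} :
  (forall y, derivable f y u) -> (forall y, derivable ('D_u f) y v) -> 0 < h ->
  exists2 p, `|x - p| <= h * (`|u| + `|v|) &
    second_difference f u v x h = 'D_v ('D_u f) p * h * h.
Proof.
move=> du duv h0.
have [a /andP[a0 ah] Ea] := mvt_segment h0
  (fun s => is_deriveB (@is_derive_line f u (h *: v + x) s (du _))
                      (@is_derive_line f u x s (du _))).
have [b /andP[b0 bh] Eb] := mvt_segment h0
  (fun t => @is_derive_line ('D_u f) v (a *: u + x) t (duv _)).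
exists (b *: v + (a *: u + x)).
  rewrite addrA opprD addrCA subrr addr0 normrN.
  rewrite (le_trans (ler_normD _ _)) // !normrZ !ger0_norm //.
  by rewrite mulrDr addrC lerD // ler_wpM2r.
move: Ea Eb; rewrite /second_difference !fctE !scale0r !add0r => -> <-.
by rewrite [a *: u + (h *: v + x)]addrCA.
Qed.

Lemma derive_comm f u v x :
  (forall y, derivable f y u) -> (forall y, derivable f y v) ->
  (forall y, derivable ('D_u f) y v) -> (forall y, derivable ('D_v f) y u) ->
  {for x, continuous ('D_v ('D_u f))} -> {for x, continuous ('D_u ('D_v f))} ->
  'D_v ('D_u f) x = 'D_u ('D_v f) x.
Proof.
move=> du dv duv dvu cuv cvu.
apply/eqP; rewrite -subr_eq0 -normr_le0; apply/ler_addgt0Pl => e e0.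
rewrite addr0.
have e2 : 0 < e / 2 by rewrite divr_gt0.
have [d1 /= d10 near1] := iffLR (nbhs_normP _ _) (cvgr_dist_lt _ _ cuv _ e2).
have [d2 /= d20 near2] := iffLR (nbhs_normP _ _) (cvgr_dist_lt _ _ cvu _ e2).
pose d := Num.min d1 d2.
have uv1 : 0 < `|u| + `|v| + 1 by rewrite ltr_wpDl // addr_ge0.
pose h := d / (`|u| + `|v| + 1).
have h0 : 0 < h by rewrite divr_gt0 // lt_min d10 d20.
have hd : h * (`|u| + `|v|) < d.
  by rewrite /h mulrAC ltr_pdivrMr // ltr_pM2l ?ltrDl // lt_min d10 d20.
have [p1 xp1 E1] := second_difference_mvt x du duv h0.
have [p2 xp2 E2] := second_difference_mvt x dv dvu h0.
have Ep : 'D_v ('D_u f) p1 = 'D_u ('D_v f) p2.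
  have hn : h != 0 by rewrite gt_eqF.
  by apply: (mulIf hn); apply: (mulIf hn); rewrite -E1 -E2 second_differenceC.
have close1 : `|'D_v ('D_u f) x - 'D_v ('D_u f) p1| < e / 2.
  apply: near1; apply: (le_lt_trans xp1); apply: (lt_le_trans hd).
  by rewrite ge_min lexx.
have close2 : `|'D_u ('D_v f) x - 'D_u ('D_v f) p2| < e / 2.
  apply: near2; apply: (le_lt_trans xp2); rewrite addrC; apply: (lt_le_trans hd).
  by rewrite ge_min lexx orbT.
rewrite -(subrK ('D_v ('D_u f) p1) ('D_v ('D_u f) x)) -addrA.
apply: (le_trans (ler_normD _ _)); rewrite [e]splitr; apply/ltW/ltrD.
  exact: close1.
by rewrite Ep distrC.
Qed.

End schwarz.

Section graph_current.
Variables (R : realType) (n : nat).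
Implicit Types (f : 'rV[R]_n -> R) (x : 'rV[R]_n).

Lemma partial_comm f i j x : C2 f ->
  partial (partial f i) j x = partial (partial f j) i x.
Proof.
move=> [_ [d1 [_ [d2 c2]]]].
by apply: derive_comm => //; [exact: d2 | exact: d2 | exact: c2 | exact: c2].
Qed.

Lemma dG_hessian f x : C2 f ->
  dG f x = dFQ (map_mx (fun r : R => r%:C) (hessian f x)).
Proof.
move=> f_C2; apply/funext => l; rewrite /dG /dFQ map_row_mx; congr row_mx.
  by apply/matrixP => a b; rewrite !mxE; case: (_ && _).
by apply/matrixP => a b; rewrite !mxE partial_comm.
Qed.

Lemma indic_graph_pt f (B : set 'rV[R]_n) x :
  \1_(@proj_base R n @^-1` B) (graph_pt f x) = \1_B x :> R.
Proof.
by rewrite /indic /preimage /proj_base /graph_pt; congr (_%:R);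
  rewrite /in_mem /= /in_set /= row_mxKl.
Qed.

Lemma form_evalZ (c : R[i]) (tau : cform R n) v :
  form_eval (fun S => c * tau S) v = c * form_eval tau v.
Proof. by rewrite /form_eval mulr_sumr; apply: eq_bigr => S _; rewrite mulrA. Qed.

Lemma cint_indic (B : set 'rV[R]_n) (g : 'rV[R]_n -> R[i]) :
  cint setT (fun x => (\1_B x : R)%:C * g x) = cint B g.
Proof.
rewrite /cint; congr Complex; congr iint; apply/funext => x;
  by case: (g x) => a b /=; rewrite indicT mul1r mul0r ?subr0 ?addr0.
Qed.

End graph_current.

Theorem proposition6p17 (R : realType) (n k : nat) (tau : cform R n)
  (f : 'rV[R]_n -> R) :
  (k <= n)%N -> PLambda k tau ->
  convex_fun f -> C2 f ->
  forall B : set 'rV[R]_n, borel_rV B -> bounded_rV B ->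
    Psi tau f B =
    cint B (fun x => P_tau tau (map_mx (fun r : R => r%:C) (hessian f x))).
Proof.
move=> _ _ _ f_C2 B _ _.
rewrite /Psi /Dcycle_C2 -[RHS]cint_indic; congr cint; apply/funext => x.
by rewrite form_evalZ indic_graph_pt dG_hessian.
Qed.
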